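(* Let $H:[0,1)\to(0,\infty)$ be any function and for $D=(\mu,\mathcal{A},\mathcal{B},\mathcal{F})\in\mathcal{BV}(\Omega)$ set $\Theta^{(H)}_D:=|\mathcal{B}|^2H(|\mu|^2)\,dx\,dy$. Then the following are equivalent: (a) $\Theta^{(H)}$ is gauge-invariant and diffeomorphism-covariant, i.e. $\Theta^{(H)}_{\phi\cdot D}=\Theta^{(H)}_D$ for every domain $\Omega$, every $D\in\mathcal{BV}(\Omega)$ and every gauge $\phi$ on $\Omega$, and $\Theta^{(H)}_{\Phi^*D}=\Phi^*\Theta^{(H)}_D$ for every diffeomorphism $\Phi:\Omega_1\to\Omega_2$ between domains and every $D\in\mathcal{BV}(\Omega_2)$; (b) there is a constant $C>0$ with $H(s)=\frac{C}{1-s}$ for all $s\in[0,1)$.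
   Context: A domain is an open connected subset of $\mathbb{C}$, $z=x+iy$. $\mathcal{BV}(\Omega)$ is the set of quadruples $(\mu,\mathcal{A},\mathcal{B},\mathcal{F})$ of continuous complex functions on $\Omega$ with $|\mu|<1$ pointwise. Gauge action: for a $C^1$ nowhere-vanishing $\phi$ on $\Omega$, $\phi\cdot(\mu,\mathcal{A},\mathcal{B},\mathcal{F})=(\mu,\ \mathcal{A}-\phi_{\bar z}/\phi+\mu\phi_z/\phi,\ \mathcal{B}\phi/\bar\phi,\ \phi\mathcal{F})$. Diffeomorphism: $C^1$ bijection $\Phi:\Omega_1\to\Omega_2$ with $C^1$ inverse and $J=|\Phi_z|^2-|\Phi_{\bar z}|^2>0$; for $D\in\mathcal{BV}(\Omega_2)$, with $K=\Phi_z+(\mu\circ\Phi)\overline{\Phi_{\bar z}}$, $\Phi^*D=((\Phi_{\bar z}+(\mu\circ\Phi)\overline{\Phi_z})/K,\ J(\mathcal{A}\circ\Phi)/K,\ J(\mathcal{B}\circ\Phi)/K,\ J(\mathcal{F}\circ\Phi)/K)$. The pullback of a 2-form is $\Phi^*(f\,dx\,dy)=(f\circ\Phi)J\,dx\,dy$. *)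

(* The complex plane is Coquelicot's C = R * R,
   z = x + i y  <->  (x, y). *)
From Stdlib Require Import Reals.
From Coquelicot Require Import Coquelicot.
Open Scope R_scope.

Definition connected_set (S : C -> Prop) : Prop :=
  forall U V : C -> Prop, open U -> open V ->
    (forall p, S p -> U p \/ V p) ->
    (forall p, S p -> U p -> V p -> False) ->
    (forall p, S p -> U p) \/ (forall p, S p -> V p).

Definition domain (O : C -> Prop) : Prop := open O /\ connected_set O.

Definition C1_with (O : C -> Prop) (f fx fy : C -> C) : Prop :=
  forall p : C, O p ->
    is_derive (fun t : R => f (t, snd p)) (fst p) (fx p) /\
    is_derive (fun t : R => f (fst p, t)) (snd p) (fy p) /\
    continuous fx p /\ continuous fy p.

Definition C1_on (O : C -> Prop) (f : C -> C) : Prop :=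
  exists fx fy, C1_with O f fx fy.

Definition dz (fx fy : C -> C) (p : C) : C := ((fx p - Ci * fy p) / RtoC 2)%C.
Definition dzb (fx fy : C -> C) (p : C) : C := ((fx p + Ci * fy p) / RtoC 2)%C.

Record quad := Quad { qmu : C -> C; qA : C -> C; qB : C -> C; qF : C -> C }.

Definition continuous_on (O : C -> Prop) (f : C -> C) : Prop :=
  forall p, O p -> continuous f p.

Definition BV (O : C -> Prop) (D : quad) : Prop :=
  continuous_on O (qmu D) /\ continuous_on O (qA D) /\
  continuous_on O (qB D) /\ continuous_on O (qF D) /\
  forall p, O p -> Cmod (qmu D p) < 1.

Definition gauge_with (O : C -> Prop) (phi phix phiy : C -> C) : Prop :=
  C1_with O phi phix phiy /\ forall p, O p -> phi p <> RtoC 0.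

Definition gauge_act (phi phix phiy : C -> C) (D : quad) : quad :=
  Quad (qmu D)
       (fun p => (qA D p - dzb phix phiy p / phi p
                  + qmu D p * dz phix phiy p / phi p)%C)
       (fun p => (qB D p * phi p / Cconj (phi p))%C)
       (fun p => (phi p * qF D p)%C).

Definition jac (Px Py : C -> C) (p : C) : R :=
  Cmod (dz Px Py p) ^ 2 - Cmod (dzb Px Py p) ^ 2.

Definition diffeo_with (O1 O2 : C -> Prop) (Phi Px Py : C -> C) : Prop :=
  C1_with O1 Phi Px Py /\
  (forall p, O1 p -> O2 (Phi p)) /\
  (exists Psi : C -> C,
      C1_on O2 Psi /\
      (forall q, O2 q -> O1 (Psi q)) /\
      (forall p, O1 p -> Psi (Phi p) = p) /\
      (forall q, O2 q -> Phi (Psi q) = q)) /\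
  (forall p, O1 p -> 0 < jac Px Py p).

Definition pullback (Phi Px Py : C -> C) (D : quad) : quad :=
  let K := fun p => (dz Px Py p + qmu D (Phi p) * Cconj (dzb Px Py p))%C in
  let J := fun p => RtoC (jac Px Py p) in
  Quad (fun p => ((dzb Px Py p + qmu D (Phi p) * Cconj (dz Px Py p)) / K p)%C)
       (fun p => (J p * qA D (Phi p) / K p)%C)
       (fun p => (J p * qB D (Phi p) / K p)%C)
       (fun p => (J p * qF D (Phi p) / K p)%C).

(* Theta^(H)_D = |B|^2 H(|mu|^2) dx dy, represented by its density *)
Definition Theta (H : R -> R) (D : quad) (p : C) : R :=
  Cmod (qB D p) ^ 2 * H (Cmod (qmu D p) ^ 2).

(* pullback of a 2-form f dx dy: (f o Phi) J dx dy *)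
Definition pullback_form (Phi Px Py : C -> C) (f : C -> R) (p : C) : R :=
  f (Phi p) * jac Px Py p.

(* Theta^(H) is gauge invariant and diffeomorphism covariant;
   2-forms on a domain are compared pointwise on that domain *)
Definition natural_Theta (H : R -> R) : Prop :=
  (forall (O : C -> Prop) (D : quad) (phi phix phiy : C -> C),
      domain O -> BV O D -> gauge_with O phi phix phiy ->
      forall p, O p -> Theta H (gauge_act phi phix phiy D) p = Theta H D p) /\
  (forall (O1 O2 : C -> Prop) (Phi Px Py : C -> C) (D : quad),
      domain O1 -> domain O2 -> diffeo_with O1 O2 Phi Px Py -> BV O2 D ->
      forall p, O1 p ->
        Theta H (pullback Phi Px Py D) p = pullback_form Phi Px Py (Theta H D) p).

(* Gauge invariance holds for every [H], since [|phi / conj phi| = 1].  Under a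
   diffeomorphism, with [K = Phi_z + (mu o Phi) conj Phi_zbar], the coefficient
   [B] is multiplied by [J / K] and, by an algebraic identity, [1 - |mu|^2] by
   [J / |K|^2]; so [|B|^2 / (1 - |mu|^2)] transforms exactly as a 2-form, and
   [H s = C / (1 - s)] is covariant.  Conversely, pulling back [mu = 0, B = 1]
   along the linear map with [Phi_z = 1], [Phi_zbar = sqrt s] gives
   [mu' = sqrt s] and [B' = J = 1 - s], and covariance at one point reads
   [(1 - s)^2 H s = (1 - s) H 0].  The plane is a domain by the intermediate
   value theorem. *)

From Pilot Require Import Defs.
From Stdlib Require Import Reals Lra Classical ClassicalEpsilon.
From Coquelicot Require Import Coquelicot.
Open Scope R_scope.

Lemma is_derive_affine {V : NormedModule R_AbsRing} (v w : V) (x : R) :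
  is_derive (fun t : R => plus (scal t v) w) x v.
Proof.
  pose proof (is_derive_plus _ _ x _ _
    (is_derive_scal_l (fun t : R => t) x one v (is_derive_id x))
    (is_derive_const w x)) as Hd.
  now rewrite scal_one, plus_zero_r in Hd.
Qed.

Definition sign_of {T : Type} (U : T -> Prop) (z : T) : R :=
  if excluded_middle_informative (U z) then -1 else 1.

Lemma continuous_sign_of {T : UniformSpace} (U V : T -> Prop) (z : T) :
  open U -> open V -> (forall y, U y \/ V y) -> (forall y, U y -> V y -> False) ->
  continuous (sign_of U) z.
Proof.
  intros U_open V_open cover disj.
  apply (continuous_ext_loc _ (fun _ => sign_of U z)); [| apply continuous_const].
  unfold sign_of.
  destruct (cover z) as [Uz | Vz].
  - apply (filter_imp U); [| exact (U_open z Uz)]. intros y Uy.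
    do 2 destruct excluded_middle_informative; tauto.
  - apply (filter_imp V); [| exact (V_open z Vz)]. intros y Vy.
    do 2 destruct excluded_middle_informative; firstorder.
Qed.

(* Along the segment from [p] to [q], [sign_of U] would be a continuous
   function with values in {-1, 1} that changes sign. *)
Lemma normed_module_not_separated {V : NormedModule R_AbsRing} (U W : V -> Prop) (p q : V) :
  open U -> open W -> (forall z, U z \/ W z) -> (forall z, U z -> W z -> False) ->
  U p -> W q -> False.
Proof.
  intros U_open W_open cover disj Up Wq.
  set (g := fun t : R => plus (scal t (minus q p)) p).
  set (h := fun t => sign_of U (g t)).
  assert (g0 : g 0 = p).
  { unfold g. change 0 with (@zero R_Ring). now rewrite scal_zero_l, plus_zero_l. }
  assert (g1 : g 1 = q).
  { unfold g, minus. change 1 with (@one R_Ring). rewrite scal_one, <- plus_assoc.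
    transitivity (plus q zero); [apply f_equal; exact (plus_opp_l p) | apply plus_zero_r]. }
  assert (h0 : h 0 = -1).
  { unfold h, sign_of. rewrite g0. destruct excluded_middle_informative; tauto. }
  assert (h1 : h 1 = 1).
  { unfold h, sign_of. rewrite g1. destruct excluded_middle_informative; firstorder. }
  assert (h_cont : continuity h).
  { intros t. apply continuity_pt_filterlim, (continuous_comp g (sign_of U)).
    - exact (ex_derive_continuous g t (ex_intro _ _ (is_derive_affine _ _ t))).
    - now apply continuous_sign_of with W. }
  destruct (IVT_gen h 0 1 0 h_cont) as [t [_ ht]].
  { rewrite h0, h1. unfold Rmin, Rmax. destruct Rle_dec; lra. }
  revert ht. unfold h, sign_of. destruct excluded_middle_informative; lra.
Qed.

Lemma domain_plane : Defs.domain (fun _ => True).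
Proof.
  split; [apply open_true |].
  intros U V U_open V_open cover disj.
  destruct (classic (forall p, True -> U p)) as [allU | notU]; [now left | right].
  apply not_all_ex_not in notU as [q nUq].
  intros p _. destruct (cover p I) as [Up | Vp]; [exfalso | exact Vp].
  destruct (cover q I) as [Uq | Vq]; [tauto |].
  exact (normed_module_not_separated U V p q U_open V_open
    (fun z => cover z I) (fun z => disj z I) Up Vq).
Qed.

Lemma Cmod_sqr (z : C) : Cmod z ^ 2 = fst z ^ 2 + snd z ^ 2.
Proof. unfold Cmod. rewrite pow2_sqrt; [reflexivity | nra]. Qed.

(* With [a = Phi_z], [b = Phi_zbar] and [m = mu o Phi], the left side is
   [|K|^2 - |K mu'|^2] for the pulled-back Beltrami coefficient [mu']. *)
Lemma Cmod2_beltrami_identity (a b m : C) :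
  Cmod (a + m * Cconj b)%C ^ 2 - Cmod (b + m * Cconj a)%C ^ 2 =
  (Cmod a ^ 2 - Cmod b ^ 2) * (1 - Cmod m ^ 2).
Proof. rewrite !Cmod_sqr. destruct a, b, m; simpl. ring. Qed.

Section BeltramiQuotient.
Variables a b m : C.
Hypotheses (ab_pos : 0 < Cmod a ^ 2 - Cmod b ^ 2) (m_lt1 : Cmod m < 1).

Lemma Cmod_beltrami_denominator_pos : 0 < Cmod (a + m * Cconj b)%C.
Proof.
  pose proof (Cmod2_beltrami_identity a b m).
  pose proof (Cmod_ge_0 m). pose proof (Cmod_ge_0 (a + m * Cconj b)%C).
  assert (0 < (Cmod a ^ 2 - Cmod b ^ 2) * (1 - Cmod m ^ 2)) by (apply Rmult_lt_0_compat; nra).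
  nra.
Qed.

Lemma one_sub_Cmod2_beltrami_quotient :
  1 - Cmod ((b + m * Cconj a) / (a + m * Cconj b))%C ^ 2 =
  (Cmod a ^ 2 - Cmod b ^ 2) * (1 - Cmod m ^ 2) / Cmod (a + m * Cconj b)%C ^ 2.
Proof.
  pose proof Cmod_beltrami_denominator_pos as K_pos.
  rewrite Cmod_div by (apply Cmod_gt_0; exact K_pos).
  rewrite <- Cmod2_beltrami_identity. field. lra.
Qed.

End BeltramiQuotient.

Lemma Theta_gauge_act (H : R -> R) (phi phix phiy : C -> C) (D : quad) (p : C) :
  phi p <> RtoC 0 -> Theta H (gauge_act phi phix phiy D) p = Theta H D p.
Proof.
  intros phi_nz. unfold Theta, gauge_act; cbn [qmu qB].
  assert (0 < Cmod (phi p)) by (apply Cmod_gt_0; exact phi_nz).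
  assert (Cconj (phi p) <> RtoC 0) by (apply Cmod_gt_0; rewrite Cmod_conj; lra).
  rewrite Cmod_div, Cmod_mult, Cmod_conj by assumption.
  f_equal. field. lra.
Qed.

Section InverseLaw.
Variables (c : R) (H : R -> R).
Hypothesis H_inverse_law : forall s, 0 <= s < 1 -> H s = c / (1 - s).

Lemma Theta_pullback_inverse_law (Phi Px Py : C -> C) (D : quad) (p : C) :
  0 < jac Px Py p -> Cmod (qmu D (Phi p)) < 1 ->
  Theta H (pullback Phi Px Py D) p = pullback_form Phi Px Py (Theta H D) p.
Proof.
  unfold Theta, pullback, pullback_form, jac; cbn [qmu qB].
  set (a := dz Px Py p). set (b := dzb Px Py p).
  set (m := qmu D (Phi p)). set (K := (a + m * Cconj b)%C).
  intros J_pos m_lt1.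
  pose proof (Cmod_beltrami_denominator_pos a b m J_pos m_lt1) as K_pos.
  pose proof (one_sub_Cmod2_beltrami_quotient a b m J_pos m_lt1) as defect.
  fold K in K_pos, defect.
  assert (0 <= Cmod m) by apply Cmod_ge_0.
  assert (0 < (Cmod a ^ 2 - Cmod b ^ 2) * (1 - Cmod m ^ 2) / Cmod K ^ 2).
  { apply Rdiv_lt_0_compat; [apply Rmult_lt_0_compat |]; nra. }
  assert (0 <= Cmod ((b + m * Cconj a) / K)%C ^ 2) by apply pow2_ge_0.
  rewrite (H_inverse_law (Cmod m ^ 2)) by nra.
  rewrite (H_inverse_law (Cmod ((b + m * Cconj a) / K)%C ^ 2)) by lra.
  rewrite defect, Cmod_div, Cmod_mult, Cmod_R, Rabs_right by (try apply Cmod_gt_0; lra).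
  field. nra.
Qed.

Lemma inverse_law_natural_Theta : natural_Theta H.
Proof.
  split.
  - intros O D phi phix phiy _ _ [_ phi_nz] p Op.
    exact (Theta_gauge_act H phi phix phiy D p (phi_nz p Op)).
  - intros O1 O2 Phi Px Py D _ _ [_ [Phi_maps [_ J_pos]]] [_ [_ [_ [_ mu_lt1]]]] p O1p.
    exact (Theta_pullback_inverse_law Phi Px Py D p (J_pos p O1p) (mu_lt1 _ (Phi_maps p O1p))).
Qed.

End InverseLaw.

Definition stretch (a b : R) (z : C) : C := (a * fst z, b * snd z).

Lemma C1_with_stretch (O : C -> Prop) (a b : R) :
  C1_with O (stretch a b) (fun _ => (a, 0) : C) (fun _ => (0, b) : C).
Proof.
  intros p _. split; [| split; [| split; apply continuous_const]].
  - eapply is_derive_ext; [| apply (is_derive_affine (V := C_R_NormedModule) (a, 0) (0, b * snd p))].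
    intros t. apply injective_projections; cbn; ring.
  - eapply is_derive_ext; [| apply (is_derive_affine (V := C_R_NormedModule) (0, b) (a * fst p, 0))].
    intros t. apply injective_projections; cbn; ring.
Qed.

Lemma dz_stretch (a b : R) (p : C) :
  dz (fun _ => (a, 0) : C) (fun _ => (0, b) : C) p = RtoC ((a + b) / 2).
Proof. apply injective_projections; cbn; field. Qed.

Lemma dzb_stretch (a b : R) (p : C) :
  dzb (fun _ => (a, 0) : C) (fun _ => (0, b) : C) p = RtoC ((a - b) / 2).
Proof. apply injective_projections; cbn; field. Qed.

Lemma jac_stretch (a b : R) (p : C) :
  jac (fun _ => (a, 0) : C) (fun _ => (0, b) : C) p = a * b.
Proof.
  unfold jac. rewrite dz_stretch, dzb_stretch, !Cmod_R, !pow2_abs. field.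
Qed.

Lemma diffeo_stretch (a b : R) : 0 < a -> 0 < b ->
  diffeo_with (fun _ => True) (fun _ => True)
    (stretch a b) (fun _ => (a, 0) : C) (fun _ => (0, b) : C).
Proof.
  intros a_pos b_pos. split; [| split; [| split]].
  - apply C1_with_stretch.
  - trivial.
  - exists (stretch (/ a) (/ b)). split; [| split; [| split]].
    + eexists. eexists. apply C1_with_stretch.
    + trivial.
    + intros [x y] _. unfold stretch; cbn. f_equal; field; lra.
    + intros [x y] _. unfold stretch; cbn. f_equal; field; lra.
  - intros p _. rewrite jac_stretch. nra.
Qed.

Definition standard_datum : quad :=
  Quad (fun _ => RtoC 0) (fun _ => RtoC 0) (fun _ => RtoC 1) (fun _ => RtoC 0).

Lemma BV_standard_datum (O : C -> Prop) : BV O standard_datum.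
Proof.
  repeat split; try (intros p _; apply continuous_const).
  intros p _. cbn. rewrite Cmod_0. lra.
Qed.

Lemma Theta_pullback_stretch_standard (H : R -> R) (beta : R) (p : C) :
  Theta H (pullback (stretch (1 + beta) (1 - beta))
             (fun _ => (1 + beta, 0) : C) (fun _ => (0, 1 - beta) : C) standard_datum) p =
  (1 - beta ^ 2) ^ 2 * H (beta ^ 2).
Proof.
  unfold Theta, pullback, standard_datum. cbn [qmu qB].
  rewrite jac_stretch, dz_stretch, dzb_stretch.
  replace ((1 + beta + (1 - beta)) / 2) with 1 by field.
  replace ((1 + beta - (1 - beta)) / 2) with beta by field.
  replace (RtoC ((1 + beta) * (1 - beta)) * RtoC 1 / (RtoC 1 + RtoC 0 * Cconj (RtoC beta)))%C
    with (RtoC (1 - beta ^ 2)) by (apply injective_projections; cbn; field).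
  replace ((RtoC beta + RtoC 0 * Cconj (RtoC 1)) / (RtoC 1 + RtoC 0 * Cconj (RtoC beta)))%C
    with (RtoC beta) by (apply injective_projections; cbn; field).
  now rewrite !Cmod_R, !pow2_abs.
Qed.

Lemma natural_Theta_inverse_law (H : R -> R) :
  natural_Theta H -> forall s, 0 <= s < 1 -> H s = H 0 / (1 - s).
Proof.
  intros [_ covariance] s [s_ge0 s_lt1].
  set (beta := sqrt s).
  assert (beta_sqr : beta ^ 2 = s) by (apply pow2_sqrt; lra).
  assert (0 <= beta) by apply sqrt_pos.
  assert (beta < 1) by nra.
  pose proof (covariance _ _ _ _ _ standard_datum domain_plane domain_plane
    (diffeo_stretch (1 + beta) (1 - beta) ltac:(lra) ltac:(lra))
    (BV_standard_datum _) (RtoC 0) I) as law.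
  rewrite Theta_pullback_stretch_standard in law.
  unfold pullback_form, Theta, standard_datum in law. cbn [qmu qB] in law.
  rewrite jac_stretch, Cmod_0, Cmod_1, beta_sqr in law.
  apply (Rmult_eq_reg_r ((1 - s) ^ 2)); [| nra].
  replace ((1 + beta) * (1 - beta)) with (1 - s) in law by (rewrite <- beta_sqr; ring).
  replace (0 ^ 2) with 0 in law by ring.
  rewrite Rmult_comm, law. field. lra.
Qed.

Theorem proposition8p3 (H : R -> R)
  (Hpos : forall s, 0 <= s < 1 -> 0 < H s) :
  natural_Theta H <->
  exists c : R, 0 < c /\ forall s, 0 <= s < 1 -> H s = c / (1 - s).
Proof.
  split.
  - intros natural. exists (H 0). split.
    + apply Hpos. lra.
    + now apply natural_Theta_inverse_law.
  - intros [c [_ inverse_law]]. exact (inverse_law_natural_Theta c H inverse_law).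
Qed.
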